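(* Consider the Bregman proximal augmented Lagrangian method described in the context, with $\psi,\phi$ Legendre and $g=\delta_{-\mathcal{C}}$ for a closed convex cone $\mathcal{C}\subseteq\mathbb{R}^m$ whose dual cone satisfies $\mathcal{C}^*\subseteq\operatorname{dom}\phi$. Let $(x^\star,y^\star)$ be a saddle point of $L$ with $x^\star\in\operatorname{dom}\psi$, $y^\star\in\operatorname{dom}\phi$, and let $R:=2\|y^\star\|+1$. Then for every $K\ge0$, with $\breve s^K=\frac{\sum_{k=0}^K\sigma_ks^k}{\sum_{k=0}^K\sigma_k}$, $$\max\Big\{|f(\breve s^K)-f(x^\star)|,\ \operatorname{dist}(\mathcal{A}(\breve s^K),-\mathcal{C})\Big\}\le\frac{1}{\sum_{k=0}^K\sigma_k}\Big(D_\psi(x^\star,x^0)+\sup_{y\in\mathcal{C}^*\cap B_R}D_\phi(y,y^0)\Big).$$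
   Context: Let $f\in\Gamma_0(\mathbb{R}^n)$, $g\in\Gamma_0(\mathbb{R}^m)$ (proper lsc convex), $A\in\mathbb{R}^{m\times n}$, $b\in\mathbb{R}^m$, $\mathcal{A}(x)=Ax-b$. $L(x,y)=f(x)+\langle\mathcal{A}(x),y\rangle-g^*(y)$; KKT operator $T(x,y)=(\partial f(x)+A^\top y)\times(\partial g^*(y)+b-Ax)$ (maximal monotone). $\delta_S$ is the indicator function of a set $S$; the dual cone is $\mathcal{C}^*=\{y:\langle y,c\rangle\ge0\ \forall c\in\mathcal{C}\}$, so $g^*=\delta_{\mathcal{C}^*}$; $\operatorname{dist}$ is Euclidean distance and $B_R$ the closed ball of radius $R$ at $0$. A function $h\in\Gamma_0$ is Legendre if essentially smooth ($\operatorname{int}\operatorname{dom}h\ne\emptyset$, differentiable there, $\|\nabla h(z^\nu)\|\to\infty$ whenever $\operatorname{int}\operatorname{dom}h\ni z^\nu\to z\in\operatorname{bdry}\operatorname{dom}h$) and essentially strictly convex (strictly convex on every convex subset of $\operatorname{dom}\partial h$); $\nabla h^*$ is the inverse of $\nabla h$ on interiors of domains. $D_h(a,c)=h(a)-h(c)-\langle\nabla h(c),a-c\rangle$ for $a\in\operatorname{dom}h$, $c\in\operatorname{int}\operatorname{dom}h$, $+\infty$ otherwise. Let $\psi\in\Gamma_0(\mathbb{R}^n)$, $\phi\in\Gamma_0(\mathbb{R}^m)$ be Legendre, $\Phi(x,y)=\psi(x)+\phi(y)$, and assume $\operatorname{int}\operatorname{dom}\Phi\cap\operatorname{dom}T\ne\emptyset$.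 Bregman proximal augmented Lagrangian method: given $x^0\in\operatorname{int}\operatorname{dom}\psi$, $y^0\in\operatorname{int}\operatorname{dom}\phi$, step sizes $\sigma_k\ge\sigma>0$ and $\rho_k\in[0,1)$, it generates $s^k\in\operatorname{dom}\psi$, $x^{k+1},y^{k+1},v^k,u^k$ with $(v^k,u^k)\in T(s^k,y^{k+1})$, $x^{k+1}=\nabla\psi^*(\nabla\psi(x^k)-\sigma_kv^k)\in\operatorname{int}\operatorname{dom}\psi$, $y^{k+1}=\nabla\phi^*(\nabla\phi(y^k)-\sigma_ku^k)\in\operatorname{int}\operatorname{dom}\phi$, and $D_\psi(s^k,x^{k+1})\le\rho_k\big(D_\psi(s^k,x^k)+D_\phi(y^{k+1},y^k)\big)$. *)

From HB Require Import structures.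
From mathcomp Require Import all_boot all_order all_algebra.
From mathcomp Require Import boolp classical_sets reals constructive_ereal ereal.
Set Implicit Arguments. Unset Strict Implicit. Unset Printing Implicit Defensive.
Import Order.TTheory GRing.Theory Num.Theory.
Local Open Scope ring_scope.
Local Open Scope classical_set_scope.

Section Defs.
Variables (R : realType).

Definition inner {n} (u v : 'cV[R]_n) : R := \sum_(i < n) u i ord0 * v i ord0.
Definition enorm {n} (u : 'cV[R]_n) : R := Num.sqrt (inner u u).

Definition interior_e {n} (S : set 'cV[R]_n) : set 'cV[R]_n :=
  [set z | exists2 r : R, 0 < r & forall w, enorm (w - z) < r -> S w].
Definition closure_e {n} (S : set 'cV[R]_n) : set 'cV[R]_n :=
  [set z | forall r : R, 0 < r -> exists2 w, S w & enorm (w - z) < r].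
Definition bdry_e {n} (S : set 'cV[R]_n) : set 'cV[R]_n :=
  [set z | closure_e S z /\ ~ interior_e S z].
Definition dist_e {n} (z : 'cV[R]_n) (S : set 'cV[R]_n) : R :=
  inf [set enorm (z - c) | c in S].
Definition ball_e {n} (r : R) : set 'cV[R]_n := [set y | enorm y <= r].

Definition edom {n} (h : 'cV[R]_n -> \bar R) : set 'cV[R]_n := [set z | (h z < +oo)%E].
Definition proper_fun {n} (h : 'cV[R]_n -> \bar R) :=
  (forall z, h z != -oo%E) /\ exists z, (h z < +oo)%E.
Definition lsc_fun {n} (h : 'cV[R]_n -> \bar R) :=
  forall z (c : R), (c%:E < h z)%E ->
    exists2 d : R, 0 < d & forall w, enorm (w - z) < d -> (c%:E < h w)%E.
Definition convex_fun {n} (h : 'cV[R]_n -> \bar R) :=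
  forall (a b : 'cV[R]_n) (t : R), 0 < t -> t < 1 ->
    (h ((t *: a + (1 - t) *: b)%R) <= t%:E * h a + (1 - t)%R%:E * h b)%E.
Definition Gamma0 {n} (h : 'cV[R]_n -> \bar R) :=
  [/\ proper_fun h, lsc_fun h & convex_fun h].

Definition convex_set {n} (S : set 'cV[R]_n) :=
  forall (a b : 'cV[R]_n) (t : R), 0 <= t -> t <= 1 -> S a -> S b -> S (t *: a + (1 - t) *: b).

Definition subdiff {n} (h : 'cV[R]_n -> \bar R) (x : 'cV[R]_n) : set 'cV[R]_n :=
  [set xi | h x \is a fin_num /\ forall z, (h x + (inner xi (z - x)%R)%:E <= h z)%E].

Definition has_grad {n} (h : 'cV[R]_n -> \bar R) (z g : 'cV[R]_n) :=
  forall eps : R, 0 < eps -> exists2 d : R, 0 < d & forall w, enorm w < d ->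
    h (z + w) \is a fin_num /\
    `|fine (h (z + w)) - fine (h z) - inner g w| <= eps * enorm w.
Definition grad {n} (h : 'cV[R]_n -> \bar R) (z : 'cV[R]_n) : 'cV[R]_n :=
  xget 0 [set g | has_grad h z g].

Definition strictly_convex_on {n} (h : 'cV[R]_n -> \bar R) (S : set 'cV[R]_n) :=
  forall (a b : 'cV[R]_n) (t : R), S a -> S b -> a != b -> 0 < t -> t < 1 ->
    (h ((t *: a + (1 - t) *: b)%R) < t%:E * h a + (1 - t)%R%:E * h b)%E.

Definition essentially_smooth {n} (h : 'cV[R]_n -> \bar R) :=
  [/\ interior_e (edom h) !=set0,
      (forall z, interior_e (edom h) z -> exists g, has_grad h z g) &
      (forall (zs : nat -> 'cV[R]_n) z,
         (forall k, interior_e (edom h) (zs k)) -> bdry_e (edom h) z ->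
         (forall eps : R, 0 < eps -> exists N, forall k, (N <= k)%N -> enorm (zs k - z) < eps) ->
         forall M : R, exists N, forall k, (N <= k)%N -> M < enorm (grad h (zs k)))].

Definition essentially_strictly_convex {n} (h : 'cV[R]_n -> \bar R) :=
  forall S : set 'cV[R]_n, convex_set S -> S `<=` [set x | subdiff h x !=set0] ->
    strictly_convex_on h S.

Definition Legendre {n} (h : 'cV[R]_n -> \bar R) :=
  [/\ Gamma0 h, essentially_smooth h & essentially_strictly_convex h].

Definition bregman {n} (h : 'cV[R]_n -> \bar R) (a c : 'cV[R]_n) : \bar R :=
  if pselect (edom h a /\ interior_e (edom h) c)
  then (h a - h c - (inner (grad h c) (a - c)%R)%:E)%E
  else +oo%E.

Definition closed_convex_cone {m} (C : set 'cV[R]_m) :=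
  [/\ closure_e C `<=` C, convex_set C, C !=set0 &
      forall (t : R) c, 0 <= t -> C c -> C (t *: c)].
Definition dual_cone {m} (C : set 'cV[R]_m) : set 'cV[R]_m :=
  [set y | forall c, C c -> 0 <= inner y c].
Definition indic {m} (S : set 'cV[R]_m) (z : 'cV[R]_m) : \bar R :=
  if pselect (S z) then 0%E else +oo%E.

(* problem data: A(x) = A x - b, g = indicator of -C, hence g^* = indicator of C^* *)
Definition affA {m n} (A : 'M[R]_(m, n)) (b : 'cV[R]_m) (x : 'cV[R]_n) : 'cV[R]_m :=
  A *m x - b.
Definition gstar {m} (C : set 'cV[R]_m) := indic (dual_cone C).

Definition Lag {m n} (f : 'cV[R]_n -> \bar R) (A : 'M[R]_(m, n)) (b : 'cV[R]_m)
  (C : set 'cV[R]_m) (x : 'cV[R]_n) (y : 'cV[R]_m) : \bar R :=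
  (f x + (inner (affA A b x) y)%:E - gstar C y)%E.

Definition saddle_point {m n} (f : 'cV[R]_n -> \bar R) (A : 'M[R]_(m, n)) (b : 'cV[R]_m)
  (C : set 'cV[R]_m) (xs : 'cV[R]_n) (ys : 'cV[R]_m) :=
  Lag f A b C xs ys \is a fin_num /\
  forall x y, (Lag f A b C xs y <= Lag f A b C xs ys)%E /\
              (Lag f A b C xs ys <= Lag f A b C x ys)%E.

(* (v, u) \in T(x, y) for the KKT operator *)
Definition KKT {m n} (f : 'cV[R]_n -> \bar R) (A : 'M[R]_(m, n)) (b : 'cV[R]_m)
  (C : set 'cV[R]_m) (x : 'cV[R]_n) (y : 'cV[R]_m) (v : 'cV[R]_n) (u : 'cV[R]_m) :=
  (exists2 xi, subdiff f x xi & v = xi + A^T *m y) /\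
  (exists2 eta, subdiff (gstar C) y eta & u = eta + b - A *m x).

End Defs.

From HB Require Import structures.
From mathcomp Require Import all_boot all_order all_algebra.
From mathcomp Require Import boolp classical_sets reals constructive_ereal ereal.
From mathcomp Require Import topology normedtype.
From mathcomp Require Import lra ring.
Import Order.TTheory GRing.Theory Num.Theory numFieldNormedType.Exports.
Local Open Scope ring_scope.
Local Open Scope classical_set_scope.

(* Each iteration is an inexact Bregman proximal-point step on the KKT operator.
   For w in C^*, the subgradient inequalities behind (v^k, u^k) in T(s^k, y^(k+1))
   bound the gap f(s^k) - f(x^* ) + <A(s^k), w> by <v^k, s^k - x^*> + <u^k, y^(k+1) - w>;
   the four-point identity for Bregman distances and the inexactness criterion turn
   sigma_k times this bound into a telescoping difference of D_psi(x^*, x^k) + D_phi(w, y^k).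
   Summing, and using Jensen's inequality for f, bounds the gap at the ergodic average s'.
   Testing with w = y^* (through the saddle-point inequality) bounds f(s') - f(x^* ) from
   below by -|y^*| dist(A(s'), -C). Testing with w = R n, where n is the unit normal at
   the projection of A(s') onto -C, so that n lies in C^* and <A(s'), n> = dist(A(s'), -C),
   bounds f(s') - f(x^* ) + R dist(A(s'), -C) from above; since R - |y^*| = |y^*| + 1,
   the two tests together control both the objective error and the infeasibility. *)

Section Euclidean.
Context {R : realType} {n : nat}.
Implicit Types u v w : 'cV[R]_n.

Lemma innerC u v : inner u v = inner v u.
Proof. by apply: eq_bigr => i _; rewrite mulrC. Qed.

Lemma innerDl u v w : inner (u + v) w = inner u w + inner v w.
Proof. by rewrite /inner -big_split; apply: eq_bigr => i _; rewrite mxE mulrDl. Qed.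

Lemma innerDr u v w : inner w (u + v) = inner w u + inner w v.
Proof. by rewrite innerC innerDl !(innerC w). Qed.

Lemma innerZl a u v : inner (a *: u) v = a * inner u v.
Proof. by rewrite /inner mulr_sumr; apply: eq_bigr => i _; rewrite mxE mulrA. Qed.

Lemma innerZr a u v : inner v (a *: u) = a * inner v u.
Proof. by rewrite innerC innerZl innerC. Qed.

Lemma innerNl u v : inner (- u) v = - inner u v.
Proof. by rewrite -scaleN1r innerZl mulN1r. Qed.

Lemma innerNr u v : inner v (- u) = - inner v u.
Proof. by rewrite innerC innerNl innerC. Qed.

Lemma innerBl u v w : inner (u - v) w = inner u w - inner v w.
Proof. by rewrite innerDl innerNl. Qed.

Lemma innerBr u v w : inner w (u - v) = inner w u - inner w v.
Proof. by rewrite innerDr innerNr. Qed.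

Lemma inner0l u : inner 0 u = 0.
Proof. by rewrite /inner big1 // => i _; rewrite mxE mul0r. Qed.

Lemma inner0r u : inner u 0 = 0.
Proof. by rewrite innerC inner0l. Qed.

Lemma inner_suml K (F : 'I_K -> 'cV[R]_n) v :
  inner (\sum_(k < K) F k) v = \sum_(k < K) inner (F k) v.
Proof.
elim: K F => [|K IH] F; first by rewrite !big_ord0 inner0l.
by rewrite !big_ord_recr /= innerDl IH.
Qed.

Lemma inner_self_ge0 u : 0 <= inner u u.
Proof. by apply: sumr_ge0 => i _; rewrite -expr2 sqr_ge0. Qed.

Lemma inner_self_eq0 u : inner u u = 0 -> u = 0.
Proof.
move=> /eqP; rewrite psumr_eq0; last by move=> i _; rewrite -expr2 sqr_ge0.
move=> /allP u0; apply/matrixP => i j; rewrite (ord1 j) mxE.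
by have := u0 i (mem_index_enum _); rewrite -expr2 sqrf_eq0 => /eqP.
Qed.

Lemma inner_self_addZ u v t : inner (u + t *: v) (u + t *: v) =
  inner u u + 2 * t * inner u v + t ^+ 2 * inner v v.
Proof. rewrite innerDl !innerDr !innerZl !innerZr (innerC v u); ring. Qed.

Lemma coord_sqr_le_inner u r : u r ord0 ^+ 2 <= inner u u.
Proof.
rewrite /inner (bigD1 r) //= -expr2 lerDl.
by apply: sumr_ge0 => i _; rewrite -expr2 sqr_ge0.
Qed.

Lemma inner_self_le_coord u (e : R) :
  (forall r, `|u r ord0| <= e) -> inner u u <= n%:R * e ^+ 2.
Proof.
move=> ue; have -> : n%:R * e ^+ 2 = \sum_(r < n) e ^+ 2 by rewrite sumr_const card_ord mulr_natl.
apply: ler_sum => r _; have e0 := le_trans (normr_ge0 _) (ue r).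
by rewrite -expr2 -real_normK ?num_real // lerXn2r ?nnegrE.
Qed.

Lemma enorm_ge0 u : 0 <= enorm u.
Proof. exact: sqrtr_ge0. Qed.

Lemma enorm_sqr u : enorm u ^+ 2 = inner u u.
Proof. by rewrite sqr_sqrtr // inner_self_ge0. Qed.

Lemma enorm0 : enorm (0 : 'cV[R]_n) = 0.
Proof. by rewrite /enorm inner0l sqrtr0. Qed.

Lemma enormN u : enorm (- u) = enorm u.
Proof. by rewrite /enorm innerNl innerNr opprK. Qed.

Lemma enormZ a u : 0 <= a -> enorm (a *: u) = a * enorm u.
Proof.
by move=> a0; rewrite /enorm innerZl innerZr mulrA sqrtrM ?mulr_ge0 // sqrtr_sqr ger0_norm.
Qed.

Lemma enorm_lt u r : 0 < r -> inner u u < r ^+ 2 -> enorm u < r.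
Proof.
move=> r0 ur; rewrite /enorm -(ger0_norm (ltW r0)) -sqrtr_sqr ltr_sqrt //.
exact: exprn_gt0.
Qed.

Lemma inner_sqr_le u v : inner u v ^+ 2 <= inner u u * inner v v.
Proof.
have [v0|vn0] := eqVneq (inner v v) 0.
  by rewrite (inner_self_eq0 _ v0) !inner0r expr0n /= mulr0.
have vp : 0 < inner v v by rewrite lt_neqAle eq_sym vn0 inner_self_ge0.
have := inner_self_ge0 (inner v v *: u - inner u v *: v).
rewrite !innerBl !innerBr !innerZl !innerZr (innerC v u) => uv.
rewrite -subr_ge0 -(pmulr_rge0 _ vp); nra.
Qed.

Lemma inner_le_enorm u v : inner u v <= enorm u * enorm v.
Proof.
have [le0|gt0] := lerP (inner u v) 0.
  by apply: le_trans le0 _; apply: mulr_ge0; apply: enorm_ge0.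
rewrite -sqrtrM ?inner_self_ge0 // -(@ler_pXn2r _ 2) //= ?nnegrE ?sqrtr_ge0 ?(ltW gt0) //.
by rewrite sqr_sqrtr ?inner_sqr_le // mulr_ge0 ?inner_self_ge0.
Qed.

Lemma enormD_le u v : enorm (u + v) <= enorm u + enorm v.
Proof.
rewrite -(@ler_pXn2r _ 2) //= ?nnegrE ?addr_ge0 ?enorm_ge0 //.
rewrite enorm_sqr innerDl !innerDr (innerC v u) sqrrD !enorm_sqr.
have := inner_le_enorm u v; lra.
Qed.

Lemma enorm_lt_coord u (e : R) : 0 < e ->
  (forall r, `|u r ord0| <= e / n.+1%:R) -> enorm u < e.
Proof.
move=> e0 ue; apply: enorm_lt => //; have := @inner_self_le_coord u _ ue.
set t := e / n.+1%:R; have t0 : 0 < t by rewrite divr_gt0 ?ltr0n.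
have et : e = t * (n%:R + 1) by rewrite /t -natr1 mulfVK ?pnatr_eq0.
have n0 : 0 <= n%:R :> R by exact: ler0n.
move: t0; rewrite et; nra.
Qed.

Lemma inner_ge0_of_min w v :
  (forall t : R, 0 < t -> t <= 1 -> inner w w <= inner (w + t *: v) (w + t *: v)) ->
  0 <= inner w v.
Proof.
move=> wmin; rewrite leNgt; apply/negP => a0.
set a := inner w v in a0; set Q := inner v v; have Q0 : 0 <= Q := inner_self_ge0 v.
pose t := Num.min 1 (- a / (Q + 1)).
have t0 : 0 < t by rewrite lt_min ltr01 divr_gt0 //; lra.
have t1 : t <= 1 by rewrite ge_min lexx.
have tQ : t * (Q + 1) <= - a.
  rewrite -ler_pdivlMr; [by rewrite ge_min lexx orbT | lra].
have := wmin t t0 t1; rewrite inner_self_addZ -/a -/Q; nra.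
Qed.

End Euclidean.

Lemma inner_trmxl (R : realType) m n (M : 'M[R]_(m, n)) (y : 'cV[R]_m) (x : 'cV[R]_n) :
  inner (M^T *m y) x = inner (M *m x) y.
Proof.
rewrite /inner.
under eq_bigr do rewrite mxE big_distrl.
under [RHS]eq_bigr do rewrite mxE big_distrl.
rewrite exchange_big /=; apply: eq_bigr => j _; apply: eq_bigr => i _.
by rewrite mxE; ring.
Qed.

Lemma mx_cauchy_cvg (R : realType) p q (u : nat -> 'M[R]_(p, q)) :
  (forall e : R, 0 < e -> exists N, forall i j, (N <= i)%N -> (N <= j)%N ->
     forall r c, `|u i r c - u j r c| < e) ->
  exists l : 'M[R]_(p, q), forall e : R, 0 < e -> exists N, forall k, (N <= k)%N ->
     forall r c, `|u k r c - l r c| < e.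
Proof.
move=> u_cauchy; have : cvg (u @ \oo).
  apply/cauchy_cvgP/cauchy_exP => e e0; have [N uN] := u_cauchy e e0.
  by exists (u N); exists N => // k /= Nk; split => // r c; rewrite /ball /= uN.
move=> /cvg_ex[l /cvg_ballP ul]; exists l => e /ul[N _ uN]; exists N => k /uN[_ ukl] r c.
by rewrite distrC; exact: ukl.
Qed.

Lemma inv_succ_lt {R : realType} {e : R} : 0 < e ->
  exists N, forall k, (N <= k)%N -> k.+1%:R^-1 < e.
Proof. by move=> e0; have [N _ eN] := near_infty_natSinv_lt (PosNum e0); exists N. Qed.

Section ConeProjection.
Context {R : realType} {m : nat} {C : set 'cV[R]_m} (coneC : closed_convex_cone C).

Lemma cone_scale t c : 0 <= t -> C c -> C (t *: c).
Proof. by case: coneC => _ _ _; apply. Qed.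

Lemma cone_midpoint a b : C a -> C b -> C ((1 / 2 : R) *: a + (1 / 2 : R) *: b).
Proof.
move=> Ca Cb; case: coneC => _ convC _ _.
rewrite {2}(_ : 1 / 2 = 1 - 1 / 2 :> R); last lra.
by apply: convC => //; lra.
Qed.

Lemma cone_add a b : C a -> C b -> C (a + b).
Proof.
move=> Ca Cb; have -> : a + b = 2 *: ((1 / 2 : R) *: a + (1 / 2 : R) *: b).
  by rewrite scalerDr !scalerA mulrC divfK ?pnatr_eq0 // !scale1r.
by apply: cone_scale; [lra | exact: cone_midpoint].
Qed.

Variable z : 'cV[R]_m.
Local Notation d := (dist_e z [set - c | c in C]).

Let has_inf_dist : has_inf [set enorm (z - c') | c' in [set - c | c in C]].
Proof.
split; last by exists 0 => _ [_ [c _ <-] <-]; exact: enorm_ge0.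
by case: coneC => _ _ [c Cc] _; exists (enorm (z - - c)); exists (- c) => //; exists c.
Qed.

Lemma dist_cone_le c : C c -> d <= enorm (z + c).
Proof.
move=> Cc; apply: (ge_inf (proj2 has_inf_dist)).
by exists (- c); [exists c | rewrite opprK].
Qed.

Lemma dist_cone_ge0 : 0 <= d.
Proof. by apply: (lb_le_inf (proj1 has_inf_dist)) => _ [_ [c _ <-] <-]; exact: enorm_ge0. Qed.

Lemma dist_cone_approx e : 0 < e -> exists2 c, C c & enorm (z + c) < d + e.
Proof.
by move=> /inf_adherent/(_ has_inf_dist)[_ [_ [c Cc <-] <-]]; rewrite opprK; exists c.
Qed.

Lemma cone_parallelogram a b : C a -> C b ->
  inner (a - b) (a - b) <= 2 * enorm (z + a) ^+ 2 + 2 * enorm (z + b) ^+ 2 - 4 * d ^+ 2.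
Proof.
move=> Ca Cb; have := dist_cone_le _ (cone_midpoint _ _ Ca Cb).
have -> : z + ((1 / 2 : R) *: a + (1 / 2 : R) *: b) = (1 / 2 : R) *: ((z + a) + (z + b)).
  by apply/matrixP => i j; rewrite !mxE; field.
have -> : a - b = (z + a) - (z + b) by rewrite opprD addrACA subrr add0r.
rewrite enormZ; last lra.
move: (z + a) (z + b) => p q pq; have d0 := dist_cone_ge0.
have pq2 : d ^+ 2 <= (1 / 2 * enorm (p + q)) ^+ 2
  by rewrite lerXn2r ?nnegrE // mulr_ge0 ?enorm_ge0.
move: pq2; rewrite exprMn !enorm_sqr !innerBl !innerBr !innerDl !innerDr (innerC q p); lra.
Qed.

Let eps (k : nat) : R := k.+1%:R^-1.

Let eps_gt0 k : 0 < eps k.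
Proof. by rewrite invr_gt0 ltr0n. Qed.

Lemma minimizing_seq_cauchy {cs : nat -> 'cV[R]_m} {N i j} :
  (forall k, C (cs k) /\ enorm (z + cs k) < d + eps k) -> (N <= i)%N -> (N <= j)%N ->
  inner (cs i - cs j) (cs i - cs j) <= 4 * ((2 * d + 1) * eps N).
Proof.
move=> csP; have d0 := dist_cone_ge0.
have eps_le k : (N <= k)%N -> eps k <= eps N.
  by move=> Nk; rewrite lef_pV2 ?posrE ?ltr0n // ler_nat ltnS.
have cs_sqr k : enorm (z + cs k) ^+ 2 <= d ^+ 2 + (2 * d + 1) * eps k.
  have [_ zk] := csP k; have := eps_gt0 k.
  have : eps k <= 1 by rewrite invr_le1 ?unitfE ?pnatr_eq0 // ler1n.
  have : enorm (z + cs k) ^+ 2 <= (d + eps k) ^+ 2.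
    by rewrite lerXn2r ?nnegrE ?enorm_ge0 ?addr_ge0 ?(ltW (eps_gt0 k)) // ltW.
  nra.
move=> Ni Nj; have := cone_parallelogram _ _ (proj1 (csP i)) (proj1 (csP j)).
have K0 : 0 <= 2 * d + 1 by lra.
have := ler_wpM2l K0 (eps_le _ Ni); have := ler_wpM2l K0 (eps_le _ Nj).
have := cs_sqr i; have := cs_sqr j; lra.
Qed.

Lemma cone_proj_exists : exists2 c0, C c0 & enorm (z + c0) = d.
Proof.
have d0 := dist_cone_ge0.
have /choice[cs csP] : forall k, exists c, C c /\ enorm (z + c) < d + eps k.
  by move=> k; have [c Cc zc] := dist_cone_approx _ (eps_gt0 k); exists c.
have [c0 cs_c0] : exists c0 : 'cV[R]_m, forall e : R, 0 < e -> exists N,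
    forall k, (N <= k)%N -> forall r c, `|cs k r c - c0 r c| < e.
  apply: mx_cauchy_cvg => e e0.
  have q0 : 0 < e ^+ 2 / (4 * (2 * d + 1)) by rewrite divr_gt0 ?exprn_gt0 //; lra.
  have [N csN] := inv_succ_lt q0; exists N => i j Ni Nj r c.
  rewrite (ord1 c) -(@ltr_pXn2r _ 2) ?nnegrE ?normr_ge0 ?(ltW e0) // real_normK ?num_real //.
  have := coord_sqr_le_inner (cs i - cs j) r; rewrite !mxE => ij.
  apply: le_lt_trans ij _; apply: le_lt_trans (minimizing_seq_cauchy csP Ni Nj) _.
  by rewrite mulrA mulrC -ltr_pdivlMr; [exact: (csN N (leqnn N)) | lra].
have c0_near e : 0 < e -> exists k, enorm (cs k - c0) < e /\ eps k < e.
  move=> e0; have [N1 csN1] := cs_c0 (e / m.+1%:R) ltac:(by rewrite divr_gt0 ?ltr0n).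
  have [N2 epsN2] := inv_succ_lt e0.
  exists (maxn N1 N2); split; last exact: epsN2 (leq_maxr _ _).
  apply: enorm_lt_coord => // r; rewrite !mxE; apply: ltW.
  exact: csN1 (leq_maxl _ _) r ord0.
have Cc0 : C c0.
  case: coneC => closedC _ _ _; apply: closedC => r r0.
  by have [k [ck _]] := c0_near r r0; exists (cs k) => //; case: (csP k).
exists c0 => //; apply/eqP; rewrite eq_le dist_cone_le ?andbT //.
rewrite leNgt; apply/negP => dlt.
have e0 : 0 < (enorm (z + c0) - d) / 2 by rewrite divr_gt0 // subr_gt0.
have [k [ck ek]] := c0_near _ e0; have [_ zk] := csP k.
have := enormD_le (z + cs k) (c0 - cs k).
rewrite addrACA subrr addr0 -opprB enormN; lra.
Qed.

Lemma cone_proj_dual c0 : C c0 -> enorm (z + c0) = d -> dual_cone C (z + c0).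
Proof.
move=> Cc0 zc0 c Cc; apply: inner_ge0_of_min => t t0 _.
rewrite -enorm_sqr zc0 -addrA -enorm_sqr lerXn2r ?nnegrE ?enorm_ge0 ?dist_cone_ge0 //.
by apply: dist_cone_le; apply: cone_add => //; apply: cone_scale => //; exact: ltW.
Qed.

Lemma cone_proj_orth c0 : C c0 -> enorm (z + c0) = d -> inner (z + c0) c0 = 0.
Proof.
move=> Cc0 zc0; apply/eqP; rewrite eq_le cone_proj_dual // andbT.
rewrite -oppr_ge0 -innerNr; apply: inner_ge0_of_min => t t0 t1.
rewrite -enorm_sqr zc0 -enorm_sqr lerXn2r ?nnegrE ?enorm_ge0 ?dist_cone_ge0 //.
rewrite scalerN -addrA (_ : c0 - t *: c0 = (1 - t) *: c0); last by rewrite scalerBl scale1r.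
apply: dist_cone_le.
by apply: cone_scale => //; lra.
Qed.

Lemma inner_le_dist_cone w : dual_cone C w -> inner z w <= enorm w * d.
Proof.
move=> Cw; have [c0 Cc0 zc0] := cone_proj_exists.
rewrite -{1}[z](addrK c0) innerBl -zc0 mulrC; have := inner_le_enorm (z + c0) w.
by have := Cw c0 Cc0; rewrite innerC; lra.
Qed.

Lemma dual_cone_ball_attains r : 0 <= r ->
  exists w, [/\ dual_cone C w, enorm w <= r & inner z w = r * d].
Proof.
move=> r0; have [c0 Cc0 zc0] := cone_proj_exists; have d0 := dist_cone_ge0.
have zw : inner z (z + c0) = d ^+ 2.
  by rewrite -{1}[z](addrK c0) innerBl (innerC c0) cone_proj_orth // subr0 -enorm_sqr zc0.
exists ((r / d) *: (z + c0)); split.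
- by move=> c Cc; rewrite innerZl mulr_ge0 ?divr_ge0 ?cone_proj_dual.
- rewrite enormZ ?divr_ge0 // zc0; have [->|dn0] := eqVneq d 0; first by rewrite mulr0.
  by rewrite divfK.
- rewrite innerZr zw; have [->|dn0] := eqVneq d 0; first by rewrite !mulr0 expr0n /= mulr0.
  by rewrite expr2 mulrA divfK.
Qed.

End ConeProjection.

Section ConvexAnalysis.
Context {R : realType} {n : nat}.
Implicit Types (h : 'cV[R]_n -> \bar R) (a c : 'cV[R]_n).

Lemma edom_fin_num {h a} : proper_fun h -> edom h a -> h a \is a fin_num.
Proof. by case=> hNy _ ha; rewrite fin_numE hNy /= -ltey. Qed.

Lemma interior_e_sub {S : set 'cV[R]_n} {z} : interior_e S z -> S z.
Proof. by case=> r r0 Sr; apply: Sr; rewrite subrr enorm0. Qed.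

Definition bregmanR h a c := fine (h a) - fine (h c) - inner (grad h c) (a - c).

Lemma bregmanE {h a c} : proper_fun h -> edom h a -> interior_e (edom h) c ->
  bregman h a c = (bregmanR h a c)%:E.
Proof.
move=> hp ha hc; rewrite /bregman.
case: pselect => [? | []] //.
have fa := edom_fin_num hp ha; have fc := edom_fin_num hp (interior_e_sub hc).
by rewrite /bregmanR !EFinB !fineK.
Qed.

Lemma bregmanRii h c : bregmanR h c c = 0.
Proof. by rewrite /bregmanR !subrr inner0r subrr. Qed.

Lemma bregmanR_four_point h a b c c' :
  bregmanR h a c - bregmanR h a c' - bregmanR h b c + bregmanR h b c' =
  inner (grad h c - grad h c') (b - a).
Proof. rewrite /bregmanR !innerBl !innerBr; ring. Qed.

Lemma bregmanR_ge0 h a c : convex_fun h -> proper_fun h -> (exists g, has_grad h c g) ->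
  edom h a -> interior_e (edom h) c -> 0 <= bregmanR h a c.
Proof.
move=> hcvx hp gex ha hc; have hg : has_grad h c (grad h c) := xgetPex 0 gex.
have fa := edom_fin_num hp ha; have fc := edom_fin_num hp (interior_e_sub hc).
set g := grad h c in hg *; set I := inner g (a - c); set N := enorm (a - c).
have N0 : 0 <= N := enorm_ge0 _.
have slope e : 0 < e -> I - e * N <= fine (h a) - fine (h c).
  move=> e0; have [r r0 hr] := hg e e0.
  pose t := Num.min (1 / 2) (r / (N + 1)).
  have t0 : 0 < t by rewrite lt_min; apply/andP; split; [lra | rewrite divr_gt0 //; lra].
  have t1 : t < 1 by apply: le_lt_trans (_ : t <= 1 / 2) _; [rewrite ge_min lexx | lra].
  have tN : t * N < r.
    have : t * (N + 1) <= r by rewrite -ler_pdivlMr ?ge_min ?lexx ?orbT //; lra.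
    by rewrite mulrDr mulr1; lra.
  have [fct] := hr (t *: (a - c)) ltac:(by rewrite enormZ ?(ltW t0)).
  rewrite innerZr enormZ ?(ltW t0) // -/I -/N ler_norml => /andP[lo _].
  have := hcvx a c t t0 t1.
  rewrite (_ : t *: a + (1 - t) *: c = c + t *: (a - c)); last first.
    by apply/matrixP => i j; rewrite !mxE; ring.
  rewrite -(fineK fct) -(fineK fa) -(fineK fc) -!EFinM -EFinD lee_fin => up.
  have : t * (I - e * N) <= t * (fine (h a) - fine (h c)) by lra.
  by rewrite ler_pM2l.
rewrite leNgt; apply/negP => D0; rewrite /bregmanR -/g -/I in D0.
pose e := (I - (fine (h a) - fine (h c))) / (2 * (N + 1)).
have e0 : 0 < e by rewrite divr_gt0 //; lra.
have eN : e * (2 * (N + 1)) = I - (fine (h a) - fine (h c)).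
  by rewrite divfK //; apply: lt0r_neq0; lra.
have := slope e e0; nra.
Qed.

Lemma convex_mean_le {h} {w : nat -> R} {p : nat -> 'cV[R]_n} :
  convex_fun h -> (forall k, 0 < w k) -> (forall k, h (p k) \is a fin_num) -> forall K,
  (h ((\sum_(k < K.+1) w k)^-1 *: \sum_(k < K.+1) w k *: p k) <=
   ((\sum_(k < K.+1) w k)^-1 * \sum_(k < K.+1) w k * fine (h (p k)))%:E)%E.
Proof.
move=> hcvx w0 fp; elim=> [|K IH].
  rewrite !big_ord_recr !big_ord0 /= !add0r scalerA mulrA !mulVf ?lt0r_neq0 //.
  by rewrite scale1r mul1r fineK.
rewrite !(big_ord_recr K.+1) /=.
move: IH; have : 0 < \sum_(k < K.+1) w k.
  by rewrite big_ord_recr /= ltr_wpDl ?sumr_ge0 // => k _; exact: ltW.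
move: (\sum_(k < K.+1) w k) (\sum_(k < K.+1) w k *: p k)
  (\sum_(k < K.+1) w k * fine (h (p k))) => S V W S0 IH.
have wK := w0 K.+1; pose t := S / (S + w K.+1).
have t0 : 0 < t by rewrite divr_gt0 // addr_gt0.
have t1 : t < 1 by rewrite ltr_pdivrMr ?addr_gt0 //; lra.
have -> : (S + w K.+1)^-1 *: (V + w K.+1 *: p K.+1) = t *: (S^-1 *: V) + (1 - t) *: p K.+1.
  apply/matrixP => i j; rewrite !mxE /t; field; lra.
apply: le_trans (hcvx _ _ _ t0 t1) _.
rewrite -(fineK (fp K.+1)) -EFinM.
apply: le_trans (leeD2r _ (lee_wpmul2l _ IH)) _; first by rewrite lee_fin ltW.
rewrite -!EFinM -EFinD lee_fin le_eqVlt; apply/orP; left; apply/eqP.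
rewrite /t; field; lra.
Qed.

End ConvexAnalysis.

Section Lagrangian.
Context {R : realType} {n m : nat}.
Context {f : 'cV[R]_n -> \bar R} {A : 'M[R]_(m, n)} {b : 'cV[R]_m} {C : set 'cV[R]_m}.

Lemma indic_fin_num (S : set 'cV[R]_m) z : indic S z \is a fin_num -> S z.
Proof. by rewrite /indic; case: pselect. Qed.

Lemma indic_in (S : set 'cV[R]_m) z : S z -> indic S z = 0%E.
Proof. by rewrite /indic; case: pselect. Qed.

Lemma dual_coneZ {t w} : 0 <= t -> dual_cone C w -> dual_cone C (t *: w).
Proof. by move=> t0 Cw c Cc; rewrite innerZl mulr_ge0 ?Cw. Qed.

Lemma LagE {x w} : f x \is a fin_num -> dual_cone C w ->
  Lag f A b C x w = (fine (f x) + inner (affA A b x) w)%:E.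
Proof. by move=> fx Cw; rewrite /Lag /gstar indic_in // sube0 EFinD fineK. Qed.

Lemma KKT_fin_num {x y v u} : KKT f A b C x y v u -> f x \is a fin_num /\ dual_cone C y.
Proof. by case=> [[xi [fx _] _] [eta [gy _] _]]; split => //; exact: indic_fin_num gy. Qed.

Lemma inner_affA_mean K (w : nat -> R) (p : nat -> 'cV[R]_n) z :
  \sum_(k < K.+1) w k != 0 ->
  inner (affA A b ((\sum_(k < K.+1) w k)^-1 *: \sum_(k < K.+1) w k *: p k)) z =
  (\sum_(k < K.+1) w k)^-1 * \sum_(k < K.+1) w k * inner (affA A b (p k)) z.
Proof.
move=> S0; rewrite /affA innerBl -inner_trmxl innerC innerZl inner_suml.
under [\sum_(k < K.+1) inner _ _]eq_bigr do rewrite innerZl.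
under [\sum_(k < K.+1) (_ * inner _ _)]eq_bigr do rewrite innerBl -inner_trmxl innerC mulrBr.
by rewrite sumrB -mulr_suml mulrBr mulrA mulVf // mul1r.
Qed.

Context {xs : 'cV[R]_n} {ys : 'cV[R]_m} (saddle : saddle_point f A b C xs ys).

Lemma saddle_fin_num : f xs \is a fin_num /\ dual_cone C ys.
Proof.
case: saddle; rewrite /Lag fin_numB fin_numD => /andP[/andP[fxs _] gys] _.
by split => //; exact: indic_fin_num gys.
Qed.

Lemma saddle_feasible {w} : dual_cone C w -> inner (affA A b xs) w <= 0.
Proof.
move=> Cw; rewrite leNgt; apply/negP => a0; have [fxs Cys] := saddle_fin_num.
set a := inner _ w in a0; set L := fine (Lag f A b C xs ys).
pose t := (`|L - fine (f xs)| + 1) / a.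
have t0 : 0 <= t by rewrite divr_ge0 // ltW.
have ta : t * a = `|L - fine (f xs)| + 1 by rewrite divfK // lt0r_neq0.
have := proj1 (proj2 saddle xs (t *: w)).
rewrite (LagE fxs (dual_coneZ t0 Cw)) -(fineK (proj1 saddle)) -/L lee_fin innerZr -/a.
by have := ler_norm (L - fine (f xs)); lra.
Qed.

Lemma saddle_compl : 0 <= inner (affA A b xs) ys.
Proof.
have [fxs Cys] := saddle_fin_num; have C0 : dual_cone C 0 by move=> c _; rewrite inner0l.
by have := proj1 (proj2 saddle xs 0); rewrite !LagE // inner0r lee_fin; lra.
Qed.

Lemma saddle_lower_bound {z} : f z \is a fin_num ->
  fine (f xs) <= fine (f z) + inner (affA A b z) ys.
Proof.
move=> fz; have [fxs Cys] := saddle_fin_num.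
by have := proj2 (proj2 saddle z ys); rewrite !LagE // lee_fin; have := saddle_compl; lra.
Qed.

Lemma KKT_gap_le {z y v u w} : KKT f A b C z y v u -> dual_cone C w ->
  fine (f z) - fine (f xs) + inner (affA A b z) w <= inner v (z - xs) + inner u (y - w).
Proof.
move=> kkt Cw; have [fz Cy] := KKT_fin_num kkt; have [fxs _] := saddle_fin_num.
case: kkt => [[xi [_ xi_sub] ->] [eta [_ eta_sub] ->]].
have fxi : fine (f z) + inner xi (xs - z) <= fine (f xs).
  by rewrite -lee_fin EFinD !fineK.
have eta_le : inner eta (w - y) <= 0.
  by have := eta_sub w; rewrite /gstar !indic_in // add0e lee_fin.
have := saddle_feasible Cy.
rewrite /affA !innerDl !innerNl !innerBr !inner_trmxl.
rewrite !innerBr in fxi eta_le; lra.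
Qed.

End Lagrangian.

Section BregmanProximalALM.
Context {R : realType} {n m : nat}.
Variables (f psi : 'cV[R]_n -> \bar R) (phi : 'cV[R]_m -> \bar R).
Variables (A : 'M[R]_(m, n)) (b : 'cV[R]_m) (C : set 'cV[R]_m).
Variables (sigma rho : nat -> R) (s x v : nat -> 'cV[R]_n) (y u : nat -> 'cV[R]_m).
Variables (xs : 'cV[R]_n) (ys : 'cV[R]_m).

Hypotheses (f_proper : proper_fun f) (f_convex : convex_fun f).
Hypotheses (psi_proper : proper_fun psi) (psi_convex : convex_fun psi)
  (psi_smooth : forall z, interior_e (edom psi) z -> exists g, has_grad psi z g).
Hypotheses (phi_proper : proper_fun phi) (phi_convex : convex_fun phi)
  (phi_smooth : forall z, interior_e (edom phi) z -> exists g, has_grad phi z g).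
Hypothesis dual_cone_dom : dual_cone C `<=` edom phi.
Hypotheses (sigma_gt0 : forall k, 0 < sigma k) (rho_range : forall k, 0 <= rho k /\ rho k < 1).
Hypotheses (s_dom : forall k, edom psi (s k))
  (s_KKT : forall k, KKT f A b C (s k) (y k.+1) (v k) (u k)).
Hypotheses (x_int : forall k, interior_e (edom psi) (x k))
  (x_step : forall k, grad psi (x k.+1) = grad psi (x k) - sigma k *: v k).
Hypotheses (y_int : forall k, interior_e (edom phi) (y k))
  (y_step : forall k, grad phi (y k.+1) = grad phi (y k) - sigma k *: u k).
Hypothesis inexact : forall k, (bregman psi (s k) (x k.+1) <=
  (rho k)%:E * (bregman psi (s k) (x k) + bregman phi (y k.+1) (y k)))%E.
Hypotheses (saddle : saddle_point f A b C xs ys) (xs_dom : edom psi xs).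
Hypothesis coneC : closed_convex_cone C.

Local Notation Dpsi a k := (bregmanR psi a (x k)).
Local Notation Dphi w k := (bregmanR phi w (y k)).
Local Notation gap z w := (fine (f z) - fine (f xs) + inner (affA A b z) w).

Lemma Dpsi_ge0 a k : edom psi a -> 0 <= Dpsi a k.
Proof. by move=> a_dom; apply: bregmanR_ge0 => //; apply: psi_smooth. Qed.

Lemma Dphi_ge0 w k : edom phi w -> 0 <= Dphi w k.
Proof. by move=> w_dom; apply: bregmanR_ge0 => //; apply: phi_smooth. Qed.

Lemma inexact_le k : Dpsi (s k) k.+1 <= Dpsi (s k) k + Dphi (y k.+1) k.
Proof.
have := inexact k.
rewrite !(bregmanE psi_proper (s_dom k) (x_int _)).
rewrite (bregmanE phi_proper (interior_e_sub (y_int _)) (y_int _)) -EFinD -EFinM lee_fin.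
have := Dpsi_ge0 (s k) k (s_dom k); have := Dphi_ge0 (y k.+1) k (interior_e_sub (y_int _)).
by have := rho_range k; nra.
Qed.

Lemma step_gap_le k w : dual_cone C w ->
  sigma k * gap (s k) w <= Dpsi xs k - Dpsi xs k.+1 + Dphi w k - Dphi w k.+1.
Proof.
move=> Cw; have gap_le := KKT_gap_le saddle (s_KKT k) Cw.
have psi_id := bregmanR_four_point psi xs (s k) (x k) (x k.+1).
have phi_id := bregmanR_four_point phi w (y k.+1) (y k) (y k.+1).
have gx : grad psi (x k) - grad psi (x k.+1) = sigma k *: v k.
  by rewrite x_step opprB addrC subrK.
have gy : grad phi (y k) - grad phi (y k.+1) = sigma k *: u k.
  by rewrite y_step opprB addrC subrK.
rewrite gx innerZl in psi_id; rewrite gy innerZl bregmanRii addr0 in phi_id.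
have := ler_wpM2l (ltW (sigma_gt0 k)) gap_le.
rewrite [X in _ <= X]mulrDr -psi_id -phi_id.
by have := inexact_le k; lra.
Qed.

Lemma sum_gap_le N w : dual_cone C w ->
  \sum_(k < N) sigma k * gap (s k) w <= Dpsi xs 0 - Dpsi xs N + Dphi w 0 - Dphi w N.
Proof.
move=> Cw; elim: N => [|N IH]; first by rewrite big_ord0; lra.
by rewrite big_ord_recr /=; have := step_gap_le N w Cw; lra.
Qed.

Local Notation sumS K := (\sum_(k < K.+1) sigma k).
Local Notation mean K := ((sumS K)^-1 *: \sum_(k < K.+1) sigma k *: s k).

Lemma sumS_gt0 K : 0 < sumS K.
Proof. by rewrite big_ord_recr /= ltr_wpDl ?sumr_ge0 // => k _; exact: ltW. Qed.

Lemma f_mean_le K : f (mean K) \is a fin_num /\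
  fine (f (mean K)) <= (sumS K)^-1 * \sum_(k < K.+1) sigma k * fine (f (s k)).
Proof.
have jensen := convex_mean_le f_convex sigma_gt0 (fun k => (KKT_fin_num (s_KKT k)).1) K.
have fm : f (mean K) \is a fin_num.
  by apply: (edom_fin_num f_proper); apply: le_lt_trans jensen (ltry _).
by move: jensen; rewrite -(fineK fm) lee_fin.
Qed.

Lemma ergodic_gap_le K w : dual_cone C w ->
  gap (mean K) w <= (sumS K)^-1 * (Dpsi xs 0 + Dphi w 0).
Proof.
move=> Cw; have [_ jensen] := f_mean_le K; have S0 := sumS_gt0 K.
rewrite inner_affA_mean ?lt0r_neq0 //.
have iS0 : 0 <= (sumS K)^-1 by rewrite invr_ge0 ltW.
have := ler_wpM2l iS0 (sum_gap_le K.+1 w Cw).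
have -> : \sum_(k < K.+1) sigma k * gap (s k) w = \sum_(k < K.+1) sigma k * fine (f (s k))
    - sumS K * fine (f xs) + \sum_(k < K.+1) sigma k * inner (affA A b (s k)) w.
  by rewrite mulr_suml -sumrB -big_split; apply: eq_bigr => k _ /=; ring.
rewrite mulrDr mulrBr mulrA mulVf ?lt0r_neq0 // mul1r.
have := Dpsi_ge0 xs K.+1 xs_dom; have := Dphi_ge0 w K.+1 (dual_cone_dom _ Cw) => Dq0 Dp0.
have : Dpsi xs 0 - Dpsi xs K.+1 + Dphi w 0 - Dphi w K.+1 <= Dpsi xs 0 + Dphi w 0 by lra.
move=> /(ler_wpM2l iS0); lra.
Qed.

Lemma ergodic_rate K :
  (maxe `|f (mean K) - f xs| (dist_e (affA A b (mean K)) [set - c | c in C])%:E <=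
   ((sumS K)^-1)%:E * (bregman psi xs (x 0%N) +
     ereal_sup [set bregman phi w (y 0%N) | w in dual_cone C `&` ball_e (2 * enorm ys + 1)]))%E.
Proof.
have [fm _] := f_mean_le K; have [fxs Cys] := saddle_fin_num saddle.
set z := affA A b (mean K); have d0 := dist_cone_ge0 coneC z.
have r0 : 0 <= 2 * enorm ys + 1 by have := enorm_ge0 ys; lra.
have [y1 [Cy1 y1_ball y1z]] := dual_cone_ball_attains coneC z _ r0.
have lower := saddle_lower_bound saddle fm.
have ys_le := inner_le_dist_cone coneC z _ Cys.
have upper := ergodic_gap_le K _ Cy1; rewrite -/z y1z in upper.
set B := _ * (_ + _) in upper; set d := dist_e z _ in d0 y1z ys_le upper *.
have ys0 := enorm_ge0 ys.
have gap_le : `|fine (f (mean K)) - fine (f xs)| <= B by rewrite ler_norml; apply/andP; split; nra.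
have d_le : d <= B by nra.
rewrite -(fineK fm) -(fineK fxs) -EFinB abse_EFin -EFin_max.
apply: (@le_trans _ _ B%:E); first by rewrite lee_fin ge_max gap_le d_le.
rewrite /B EFinM (bregmanE psi_proper xs_dom (x_int _)) EFinD.
apply: lee_wpmul2l; first by rewrite lee_fin invr_ge0 ltW ?sumS_gt0.
rewrite -(bregmanE phi_proper (dual_cone_dom _ Cy1) (y_int _)); apply: leeD2l.
by apply: ereal_sup_ubound; exists y1.
Qed.

End BregmanProximalALM.

Theorem mainTheorem17 (R : realType) (n m : nat)
  (f psi : 'cV[R]_n -> \bar R) (phi : 'cV[R]_m -> \bar R)
  (A : 'M[R]_(m, n)) (b : 'cV[R]_m) (C : set 'cV[R]_m)
  (sigma0 : R) (sigma rho : nat -> R)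
  (s x v : nat -> 'cV[R]_n) (y u : nat -> 'cV[R]_m)
  (xs : 'cV[R]_n) (ys : 'cV[R]_m) :
  Gamma0 f -> closed_convex_cone C ->
  Legendre psi -> Legendre phi ->
  dual_cone C `<=` edom phi ->
  (* int dom Phi \cap dom T is nonempty *)
  (exists x1 y1, [/\ interior_e (edom psi) x1, interior_e (edom phi) y1 &
                   exists v1 u1, KKT f A b C x1 y1 v1 u1]) ->
  interior_e (edom psi) (x 0%N) -> interior_e (edom phi) (y 0%N) ->
  0 < sigma0 -> (forall k, sigma0 <= sigma k) ->
  (forall k, 0 <= rho k /\ rho k < 1) ->
  (forall k, edom psi (s k)) ->
  (forall k, KKT f A b C (s k) (y k.+1) (v k) (u k)) ->
  (forall k, interior_e (edom psi) (x k.+1) /\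
             grad psi (x k.+1) = grad psi (x k) - sigma k *: v k) ->
  (forall k, interior_e (edom phi) (y k.+1) /\
             grad phi (y k.+1) = grad phi (y k) - sigma k *: u k) ->
  (forall k, (bregman psi (s k) (x k.+1) <=
              (rho k)%:E * (bregman psi (s k) (x k) + bregman phi (y k.+1) (y k)))%E) ->
  saddle_point f A b C xs ys -> edom psi xs -> edom phi ys ->
  forall K : nat,
    let Ssig := \sum_(k < K.+1) sigma k in
    let sK := Ssig^-1 *: \sum_(k < K.+1) sigma k *: s k in
    let Rad := 2 * enorm ys + 1 in
    (maxe `|f sK - f xs| (dist_e (affA A b sK) [set - c | c in C])%:E
      <= (Ssig^-1)%:E * (bregman psi xs (x 0%N) +
            ereal_sup [set bregman phi w (y 0%N) | w in dual_cone C `&` ball_e Rad]))%E.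
Proof.
move=> [f_proper _ f_convex] coneC [[psi_proper _ psi_convex] [_ psi_smooth _] _].
(* Neither the constraint qualification nor y^* \in dom phi enters the estimate. *)
move=> [[phi_proper _ phi_convex] [_ phi_smooth _] _] dual_cone_dom _ x0_int y0_int.
move=> sigma0_gt0 sigma_ge rho_range s_dom s_KKT x_next y_next inexact saddle xs_dom _ K /=.
have sigma_gt0 k : 0 < sigma k := lt_le_trans sigma0_gt0 (sigma_ge k).
have x_int k : interior_e (edom psi) (x k) by case: k => [|k] //; case: (x_next k).
have y_int k : interior_e (edom phi) (y k) by case: k => [|k] //; case: (y_next k).
have x_step k := proj2 (x_next k); have y_step k := proj2 (y_next k).
exact: ergodic_rate.
Qed.
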